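(* Let $S$ be an $\mathcal L$-definable set and $n\ge 1$. Let $\Delta_n=\{(\lambda,\dots,\lambda)\in\mathbb Z^n:\lambda\in\mathbb N\}$ (with $\mathbb N=\{0,1,2,\dots\}$). Then in the ring $R_S$, $$(p^n-1)\cdot[P(S\times\Delta_n)]=1.$$
   Context: Fix a prime $p$. $\mathcal L=\{+,\cdot,\mathcal O\}$ is the language of valued fields (ring operations and a unary predicate interpreted as the valuation ring $\mathbb Z_p$). An $\mathcal L$-definable set is a subset of some $\mathbb Q_p^n$ defined by a parameter-free $\mathcal L$-formula; a function is $\mathcal L$-definable if its graph is. $\mu$ denotes the Haar measure on $\mathbb Q_p^n$ normalized so that $\mu(\mathbb Z_p^n)=1$. For $X\subseteq S\times\mathbb Q_p^n$ and $s\in S$ write $X_s=\{x\in\mathbb Q_p^n:(s,x)\in X\}$. Definition of $R_S$: $R_S$ is the abelian group generated by symbols $[X]$, for all $\mathcal L$-definable $X\subseteq S\times\mathbb Q_p^n$ ($n\ge 0$ arbitrary) such that $\mu(X_s)<\infty$ for all $s\in S$, modulo the relations: (R1) $[X_1\cup X_2]=[X_1]+[X_2]$ for disjoint such $X_1,X_2\subseteq S\times\mathbb Q_p^n$; (R2) $[X]=0$ whenever $X\subseteq S\times\mathbb Q_p^n$ and $\dim X_s<n$ for every $s\in S$; (R3) $[X]=[Y]$ whenever $X,Y\subseteq S\times\mathbb Q_p^n$ and there is an $\mathcal L$-definable bijection $\phi:X\to Y$ inducing for each $s\in S$ a bijection $\phi_s:X_s\to Y_s$ such that $X_s,Y_s$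 are open in $\mathbb Q_p^n$, $\phi_s$ is $C^1$, and the $p$-adic norm of the Jacobian determinant of $\phi_s$ equals $1$ everywhere; (R4) $[X]=[X\times\mathbb Z_p]$ for every such $X$. $R_S$ is a commutative ring with unit $1=[S\times\mathbb Z_p]$ and multiplication $[X]\cdot[Y]=[X\times_S Y]$, where $X\times_S Y=\{(s,x,y): s\in S, x\in X_s, y\in Y_s\}$; integers are identified with their images in $R_S$. Angular component: for $x\in\mathbb Q_p^\times$, $\mathrm{ac}(x)=xp^{-v(x)}\bmod p\mathbb Z_p\in\mathbb F_p$, and $\mathrm{ac}(0)=0$; $v$ is the $p$-adic valuation, and $v(x)=(v(x_1),\dots,v(x_n))$ for tuples. For $\Lambda\subseteq S\times\mathbb Z^n$ (definable after identifying $\mathbb Z$ with the value group), $P(\Lambda)\subseteq S\times\mathbb Q_p^n$ is given by $P(\Lambda)_s=\{x\in\mathbb Q_p^n:\mathrm{ac}(x_1)=\dots=\mathrm{ac}(x_n)=1,\ v(x)\in\Lambda_s\}$. *)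

From HB Require Import structures.
From mathcomp Require Import all_boot all_order all_algebra.
From Stdlib Require Import ClassicalEpsilon.
Set Implicit Arguments. Unset Strict Implicit. Unset Printing Implicit Defensive.
Import Order.TTheory GRing.Theory Num.Theory.
Local Open Scope ring_scope.

Section Padic.
Variable p : nat.
Variable K : fieldType.
Variable v : K -> int.   (* the valuation; the value at 0 is irrelevant *)

(* "v(x) >= k", with v(0) = +oo *)
Definition vge (x : K) (k : int) : Prop := x = 0 \/ k <= v x.

(* (K, v) is (isomorphic to) Q_p with its p-adic valuation:
   a complete discretely valued field, v(p) = 1, residue field F_p. *)
Definition is_Qp : Prop :=
  [/\ (forall x y, x != 0 -> y != 0 -> v (x * y) = v x + v y),
      (forall x y, x != 0 -> y != 0 -> x + y != 0 ->
          (v x <= v (x + y)) || (v y <= v (x + y))),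
      (p%:R : K) != 0 /\ v p%:R = 1,
      (forall x, vge x 0 -> exists k : nat, vge (x - k%:R) 1) &
      (forall u : nat -> K,
         (forall N : int, exists M : nat, forall i j, (M <= i)%N -> (M <= j)%N ->
              vge (u i - u j) N) ->
         exists l : K, forall N : int, exists M : nat, forall i, (M <= i)%N ->
              vge (u i - l) N)].

Definition inO (x : K) : Prop := vge x 0.

Definition ac_one (x : K) : Prop := x != 0 /\ vge (x * (p%:R : K) ^ (- v x) - 1) 1.

Inductive term : Type :=
  | TVar of nat | TZero | TOne | TAdd of term & term | TMul of term & term
  | TNeg of term.
Inductive formula : Type :=
  | FEq of term & term | FO of term | FNot of formula
  | FAnd of formula & formula | FEx of nat & formula.

Fixpoint teval (e : nat -> K) (t : term) : K :=
  match t with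
  | TVar i => e i | TZero => 0 | TOne => 1
  | TAdd a b => teval e a + teval e b
  | TMul a b => teval e a * teval e b
  | TNeg a => - teval e a
  end.

Definition upd (e : nat -> K) (i : nat) (a : K) : nat -> K :=
  fun j => if j == i then a else e j.

Fixpoint sat (e : nat -> K) (f : formula) : Prop :=
  match f with
  | FEq a b => teval e a = teval e b
  | FO a => inO (teval e a)
  | FNot g => ~ sat e g
  | FAnd g h => sat e g /\ sat e h
  | FEx i g => exists a : K, sat (upd e i a) g
  end.

Definition env_of (k : nat) (x : 'rV[K]_k) : nat -> K :=
  fun i => match insub i with Some j => x 0 j | None => 0 end.

Definition definable (k : nat) (X : 'rV[K]_k -> Prop) : Prop :=
  exists f : formula, forall x, X x <-> sat (env_of x) f.

Definition definable2 (m k : nat) (X : 'rV[K]_m -> 'rV[K]_k -> Prop) : Prop :=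
  definable (fun z : 'rV[K]_(m + k) => X (lsubmx z) (rsubmx z)).

Definition vnorm_ge (k : nat) (x : 'rV[K]_k) (e : int) : Prop :=
  forall j, vge (x 0 j) e.
Definition ball (k : nat) (a : 'rV[K]_k) (e : int) (x : 'rV[K]_k) : Prop :=
  vnorm_ge (x - a) e.

Definition open_set (k : nat) (A : 'rV[K]_k -> Prop) : Prop :=
  forall x, A x -> exists e, forall y, ball x e y -> A y.

(* mu(A) < oo for the Haar measure mu normalised by mu(Z_p^k) = 1:
   A can be covered by countably many balls a_i + p^{e_i} Z_p^k
   (of measure p^{-k e_i}) with finite total measure *)
Definition fin_meas (k : nat) (A : 'rV[K]_k -> Prop) : Prop :=
  exists (a : nat -> 'rV[K]_k) (e : nat -> int),
    (forall x, A x -> exists i, ball (a i) (e i) x) /\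
    exists B : rat, forall N : nat,
      \sum_(i < N) (p%:Q) ^ (- ((k%:Z) * e i)) <= B.

(* dim A < k, with dim A = max d such that some coordinate projection
   K^k -> K^d has image with nonempty interior *)
Definition dim_lt (k : nat) (A : 'rV[K]_k -> Prop) : Prop :=
  forall (d : nat) (f : 'I_d -> 'I_k), injective f ->
    (exists (a : 'rV[K]_d) (e : int), forall y, ball a e y ->
        exists x, A x /\ forall i, x 0 (f i) = y 0 i) ->
    (d < k)%N.

Definition diff_at (k : nat) (X : 'rV[K]_k -> Prop) (f : 'rV[K]_k -> 'rV[K]_k)
    (x : 'rV[K]_k) (L : 'M[K]_k) : Prop :=
  forall N : int, exists M : int, forall h : 'rV[K]_k, X (x + h) -> vnorm_ge h M ->
    forall t : int, vnorm_ge h t -> vnorm_ge (f (x + h) - f x - h *m L) (t + N).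

Definition C1_jac1 (k : nat) (X : 'rV[K]_k -> Prop) (f : 'rV[K]_k -> 'rV[K]_k) : Prop :=
  exists J : 'rV[K]_k -> 'M[K]_k,
    [/\ forall x, X x -> diff_at X f x (J x),
        forall x, X x -> forall N : int, exists M : int, forall y, X y ->
            vnorm_ge (y - x) M -> forall i j, vge (J y i j - J x i j) N &
        forall x, X x -> \det (J x) != 0 /\ v (\det (J x)) = 0].

Section RS.
Variable m : nat.
Variable S : 'rV[K]_m -> Prop.

Definition gen : Type := {k : nat & 'rV[K]_m -> 'rV[K]_k -> Prop}.
Definition mkgen (k : nat) (X : 'rV[K]_m -> 'rV[K]_k -> Prop) : gen := existT _ k X.

Definition admissible (k : nat) (X : 'rV[K]_m -> 'rV[K]_k -> Prop) : Prop :=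
  [/\ definable2 X, (forall s x, X s x -> S s) & (forall s, S s -> fin_meas (X s))].

(* free abelian group on the symbols: finitely supported maps gen -> int *)
Definition delta (g : gen) : gen -> int :=
  fun g' => if excluded_middle_informative (g' = g) then 1 else 0.

Definition timesZp (k : nat) (X : 'rV[K]_m -> 'rV[K]_k -> Prop) :
    'rV[K]_m -> 'rV[K]_(k + 1) -> Prop :=
  fun s z => X s (lsubmx z) /\ inO (rsubmx z 0 0).

Definition is_rel (r : gen -> int) : Prop :=
  (exists (k : nat) (X1 X2 : 'rV[K]_m -> 'rV[K]_k -> Prop),
     [/\ admissible X1, admissible X2, (forall s x, ~ (X1 s x /\ X2 s x)) &
         r = fun g => delta (mkgen (fun s x => X1 s x \/ X2 s x)) g
                      - delta (mkgen X1) g - delta (mkgen X2) g])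
  \/ (exists (k : nat) (X : 'rV[K]_m -> 'rV[K]_k -> Prop),
     [/\ admissible X, (forall s, S s -> dim_lt (X s)) & r = delta (mkgen X)])
  \/ (exists (k : nat) (X Y : 'rV[K]_m -> 'rV[K]_k -> Prop)
        (phi : 'rV[K]_m -> 'rV[K]_k -> 'rV[K]_k),
     [/\ admissible X, admissible Y,
         (* phi : X -> Y, (s,x) |-> (s, phi_s x), is L-definable *)
         definable (fun z : 'rV[K]_((m + k) + (m + k)) =>
            X (lsubmx (lsubmx z)) (rsubmx (lsubmx z)) /\
            lsubmx (rsubmx z) = lsubmx (lsubmx z) /\
            rsubmx (rsubmx z) = phi (lsubmx (lsubmx z)) (rsubmx (lsubmx z))),
         (forall s, S s ->
            [/\ open_set (X s) /\ open_set (Y s),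
                (forall x, X s x -> Y s (phi s x)),
                (forall x y, X s x -> X s y -> phi s x = phi s y -> x = y),
                (forall y, Y s y -> exists x, X s x /\ phi s x = y) &
                C1_jac1 (X s) (phi s)]) &
         r = fun g => delta (mkgen X) g - delta (mkgen Y) g])
  \/ (exists (k : nat) (X : 'rV[K]_m -> 'rV[K]_k -> Prop),
     admissible X /\
     r = fun g => delta (mkgen X) g - delta (mkgen (timesZp X)) g).

Definition RS_zero (z : gen -> int) : Prop :=
  exists (N : nat) (c : nat -> int) (r : nat -> gen -> int),
    (forall i, (i < N)%N -> is_rel (r i)) /\
    forall g, z g = \sum_(i < N) c i * r i g.

Definition RS_eq (a b : gen -> int) : Prop := RS_zero (fun g => a g - b g).

Definition RS_one : gen -> int :=
  delta (mkgen (fun (s : 'rV[K]_m) (x : 'rV[K]_1) => S s /\ inO (x 0 0))).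

Definition P_diag (n : nat) : 'rV[K]_m -> 'rV[K]_n -> Prop :=
  fun s x => S s /\ (forall j, ac_one (x 0 j)) /\
             exists lam : nat, forall j, v (x 0 j) = lam%:Z.

End RS.
End Padic.

(** Write [x] for a point of [Z_p^n \ {0}] and [lam] for the minimum of the
    valuations of its coordinates.  The residues [a] of [x p^-lam] form a
    nonzero vector of [F_p^n], which splits [Z_p^n \ {0}] into [p^n - 1]
    definable cells [cell a].  Choosing a coordinate [i] with [a_i <> 0], the
    linear map [x |-> x + x_i c] with [c_j = (1 - a_j) / a_i] has Jacobian
    [1/a_i], a p-adic unit, and maps [cell a] onto [P(S x Delta_n)] (every
    coordinate then has residue [1] at level [lam]).  Hence every cell has
    class [[P(S x Delta_n)]] by (R3), the origin contributes nothing by (R2),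
    and [[S x Z_p^n] = [S x Z_p] = 1] by (R4). *)
From HB Require Import structures.
From mathcomp Require Import all_boot all_order all_algebra.
From Stdlib Require Import FunctionalExtensionality PropExtensionality Classical.
From mathcomp Require Import fingroup perm ring lra zify.
Set Implicit Arguments. Unset Strict Implicit. Unset Printing Implicit Defensive.
Import Order.TTheory GRing.Theory Num.Theory.
Local Open Scope ring_scope.

(** * First-order definability *)

Section Definability.
Variables (K : fieldType) (v : K -> int).

Definition fo_def (Q : (nat -> K) -> Prop) := exists f, forall e, Q e <-> sat v e f.

Lemma teval_ext (e e' : nat -> K) t : e =1 e' -> teval e t = teval e' t.
Proof. by move=> h; elim: t => /= [i|||a -> b ->|a -> b ->|a ->]. Qed.

Lemma sat_ext f : forall e e' : nat -> K, e =1 e' -> sat v e f <-> sat v e' f.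
Proof.
elim: f => /= [a b|a|g IH|g IHg h IHh|i g IH] e e' he.
- by rewrite !(teval_ext a he) !(teval_ext b he).
- by rewrite (teval_ext a he).
- by rewrite (IH e e' he).
- by rewrite (IHg e e' he) (IHh e e' he).
- have hu a : upd e i a =1 upd e' i a by move=> j; rewrite /upd; case: (j == i).
  by split=> [[a H]|[a H]]; exists a; move: H; rewrite (IH _ _ (hu a)).
Qed.

Lemma upd_neq (e : nat -> K) i a j : j != i -> upd e i a j = e j.
Proof. by rewrite /upd => /negbTE ->. Qed.

Lemma upd_id (e : nat -> K) i a : upd e i a i = a.
Proof. by rewrite /upd eqxx. Qed.

Lemma fo_def_env Q e e' : fo_def Q -> e =1 e' -> Q e -> Q e'.
Proof. by case=> f H he; rewrite !H; case: (sat_ext f he). Qed.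

Lemma fo_def_ext Q Q' : fo_def Q -> (forall e, Q e <-> Q' e) -> fo_def Q'.
Proof. by case=> f H h; exists f => e; rewrite -h. Qed.

Lemma fo_def_eq t1 t2 : fo_def (fun e => teval e t1 = teval e t2).
Proof. by exists (FEq t1 t2). Qed.

Lemma fo_def_O t : fo_def (fun e => inO v (teval e t)).
Proof. by exists (FO t). Qed.

Lemma fo_def_not Q : fo_def Q -> fo_def (fun e => ~ Q e).
Proof. by case=> f H; exists (FNot f) => e /=; rewrite H. Qed.

Lemma fo_def_and Q1 Q2 : fo_def Q1 -> fo_def Q2 -> fo_def (fun e => Q1 e /\ Q2 e).
Proof. by case=> f H [g G]; exists (FAnd f g) => e /=; rewrite H G. Qed.

Lemma fo_def_or Q1 Q2 : fo_def Q1 -> fo_def Q2 -> fo_def (fun e => Q1 e \/ Q2 e).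
Proof.
move=> h1 h2; apply: fo_def_ext (fo_def_not (fo_def_and (fo_def_not h1) (fo_def_not h2))) _.
by move=> e; split=> [/not_and_or [] /NNPP|[] h []]; auto.
Qed.

Lemma fo_def_True : fo_def (fun _ => True).
Proof. by exists (FEq TZero TZero). Qed.

Lemma fo_def_False : fo_def (fun _ => False).
Proof. by exists (FNot (FEq TZero TZero)) => e /=; split => // h; apply: h. Qed.

Lemma fo_def_ex i Q : fo_def Q -> fo_def (fun e => exists a, Q (upd e i a)).
Proof. by case=> f H; exists (FEx i f) => e /=; split=> [[a]|[a]]; exists a; apply/H. Qed.

Lemma fo_def_all_seq (T : eqType) (l : seq T) (Q : T -> (nat -> K) -> Prop) :
  (forall x, fo_def (Q x)) -> fo_def (fun e => forall x, x \in l -> Q x e).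
Proof.
move=> h; elim: l => [|x l IH]; first by apply: fo_def_ext fo_def_True _.
apply: fo_def_ext (fo_def_and (h x) IH) _ => e; split.
  by case=> hx hl y; rewrite in_cons => /orP [/eqP ->|/hl].
by move=> H; split=> [|y hy]; apply: H; rewrite in_cons ?eqxx ?hy ?orbT.
Qed.

Lemma fo_def_has_seq (T : eqType) (l : seq T) (Q : T -> (nat -> K) -> Prop) :
  (forall x, fo_def (Q x)) -> fo_def (fun e => exists2 x, x \in l & Q x e).
Proof.
move=> h; elim: l => [|x l IH]; first by apply: fo_def_ext fo_def_False _ => e; split=> // [[]].
apply: fo_def_ext (fo_def_or (h x) IH) _ => e; split.
  by case=> [H|[y hy H]]; [exists x; rewrite ?mem_head|exists y; rewrite ?in_cons ?hy ?orbT].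
by case=> y; rewrite in_cons => /orP [/eqP ->|hy H]; [left|right; exists y].
Qed.

Lemma fo_def_all_fin (T : finType) (Q : T -> (nat -> K) -> Prop) :
  (forall x, fo_def (Q x)) -> fo_def (fun e => forall x, Q x e).
Proof.
move=> h; apply: fo_def_ext (fo_def_all_seq (enum T) h) _ => e.
by split=> H x //; apply: H; rewrite mem_enum.
Qed.

Definition updF (e : nat -> K) (b n : nat) (y : nat -> K) : nat -> K :=
  fun i => if (b <= i < b + n)%N then y i else e i.

Lemma updF_lt (e : nat -> K) b n y i : (i < b)%N -> updF e b n y i = e i.
Proof. by move=> h; rewrite /updF leqNgt h. Qed.

Lemma updF_in (e : nat -> K) b n y j : (j < n)%N -> updF e b n y (b + j) = y (b + j).
Proof. by move=> h; rewrite /updF leq_addr ltn_add2l h. Qed.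

Lemma updFS (e : nat -> K) b n y a :
  updF (upd e (b + n) a) b n y =1 updF e b n.+1 (fun i => if i == (b + n)%N then a else y i).
Proof.
move=> i; rewrite /updF /upd addnS ltnS.
case: (eqVneq i (b + n)) => [->|ne]; first by rewrite leq_addr leqnn ltnn.
by rewrite [(i <= b + n)%N]leq_eqVlt (negbTE ne).
Qed.

Lemma fo_def_exF b n Q : fo_def Q -> fo_def (fun e => exists y, Q (updF e b n y)).
Proof.
move=> hQ; elim: n => [|n IH].
  have h0 e y : updF e b 0 y =1 e.
    by move=> i; rewrite /updF addn0; case: (leqP b i) => h //=; rewrite ltnNge h.
  apply: (fo_def_ext hQ) => e; split=> [h|[y]]; last by apply: fo_def_env.
  by exists e; apply: (fo_def_env hQ _ h) => i; rewrite h0.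
apply: fo_def_ext (fo_def_ex (b + n) IH) _ => e; split.
  by case=> a [y /(fo_def_env hQ (updFS _ _ _ _ _)) h]; eexists; apply: h.
case=> y h; exists (y (b + n)), y; apply: (fo_def_env hQ _ h) => i.
by rewrite updFS; congr (updF _ _ _ _ _); apply: functional_extensionality => j; case: eqP => [->|].
Qed.

Fixpoint tnat (k : nat) : term := if k is k'.+1 then TAdd (tnat k') TOne else TZero.

Lemma tnatE (e : nat -> K) k : teval e (tnat k) = k%:R.
Proof. by elim: k => //= k ->; rewrite mulrS addrC. Qed.

Fixpoint tpow (t : term) (k : nat) : term :=
  if k is k'.+1 then TMul (tpow t k') t else TOne.

Lemma tpowE (e : nat -> K) t k : teval e (tpow t k) = teval e t ^+ k.
Proof. by elim: k => //= k ->; rewrite exprSr. Qed.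

(** Replacing by [0] every free variable of index [>= m]: this moves a
    formula about [K^m] into an arbitrary environment. *)
Definition zenv (m : nat) (bnd : seq nat) (e : nat -> K) : nat -> K :=
  fun i => if (i < m)%N || (i \in bnd) then e i else 0.

Fixpoint tzero (m : nat) (bnd : seq nat) (t : term) : term :=
  match t with
  | TVar i => if (i < m)%N || (i \in bnd) then TVar i else TZero
  | TZero => TZero
  | TOne => TOne
  | TAdd a b => TAdd (tzero m bnd a) (tzero m bnd b)
  | TMul a b => TMul (tzero m bnd a) (tzero m bnd b)
  | TNeg a => TNeg (tzero m bnd a)
  end.

Fixpoint fzero (m : nat) (bnd : seq nat) (f : formula) : formula :=
  match f with
  | FEq a b => FEq (tzero m bnd a) (tzero m bnd b)
  | FO a => FO (tzero m bnd a)
  | FNot g => FNot (fzero m bnd g)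
  | FAnd g h => FAnd (fzero m bnd g) (fzero m bnd h)
  | FEx i g => FEx i (fzero m (i :: bnd) g)
  end.

Lemma tzeroE m bnd (e : nat -> K) t : teval e (tzero m bnd t) = teval (zenv m bnd e) t.
Proof. by elim: t => /= [i|||a -> b ->|a -> b ->|a ->] //; rewrite /zenv; case: ifP. Qed.

Lemma fzeroE m f : forall bnd e, sat v e (fzero m bnd f) <-> sat v (zenv m bnd e) f.
Proof.
elim: f => /= [a b|a|g IH|g IHg h IHh|i g IH] bnd e.
- by rewrite !tzeroE.
- by rewrite tzeroE.
- by rewrite IH.
- by rewrite IHg IHh.
- have hu a : zenv m (i :: bnd) (upd e i a) =1 upd (zenv m bnd e) i a.
    move=> j; rewrite /zenv /upd in_cons.
    by case: (eqVneq j i) => [->|]; rewrite ?orbT //= orbF.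
  by split=> [[a H]|[a H]]; exists a; move: H; rewrite IH (sat_ext g (hu a)).
Qed.

Lemma env_of_lt k (x : 'rV[K]_k) i (lt_ik : (i < k)%N) : env_of x i = x 0 (Ordinal lt_ik).
Proof. by rewrite /env_of insubT. Qed.

Lemma env_of_ge k (x : 'rV[K]_k) i : (k <= i)%N -> env_of x i = 0.
Proof. by move=> h; rewrite /env_of insubF // ltnNge h. Qed.

Lemma env_of_ord k (x : 'rV[K]_k) (i : 'I_k) : env_of x i = x 0 i.
Proof. by rewrite (env_of_lt x (ltn_ord i)); congr (x 0 _); apply: val_inj. Qed.

Definition rowe (o k : nat) (e : nat -> K) : 'rV[K]_k := \row_(j < k) e (o + j)%N.

Lemma rowe_updF o k (e : nat -> K) b n y :
  (o + k <= b)%N -> rowe o k (updF e b n y) = rowe o k e.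
Proof.
move=> h; apply/rowP => j; rewrite !mxE updF_lt //.
by apply: leq_trans h; rewrite ltn_add2l.
Qed.

Lemma fo_def_rowe m (S : 'rV[K]_m -> Prop) : definable v S -> fo_def (fun e => S (rowe 0 m e)).
Proof.
case=> f H; exists (fzero m [::] f) => e; rewrite fzeroE H.
apply: sat_ext => i; rewrite /zenv orbF; case: (ltnP i m) => lt_im.
  by rewrite (env_of_lt _ lt_im) mxE add0n.
by rewrite env_of_ge.
Qed.

Lemma rowe_env_of k (z : 'rV[K]_k) : rowe 0 k (env_of z) = z.
Proof. by apply/rowP => j; rewrite mxE add0n env_of_ord. Qed.

Lemma lsubmx_rowe o a b (e : nat -> K) : lsubmx (rowe o (a + b) e) = rowe o a e.
Proof. by apply/rowP => j; rewrite !mxE. Qed.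

Lemma rsubmx_rowe o a b (e : nat -> K) : rsubmx (rowe o (a + b) e) = rowe (o + a) b e.
Proof. by apply/rowP => j; rewrite !mxE addnA. Qed.

Lemma definable2_fo_def m k (X : 'rV[K]_m -> 'rV[K]_k -> Prop) :
  fo_def (fun e => X (rowe 0 m e) (rowe m k e)) -> definable2 v X.
Proof. by case=> f H; exists f => z; rewrite -H -{1 2}(rowe_env_of z) lsubmx_rowe rsubmx_rowe. Qed.

End Definability.

Section RSRelations.
Variables (p : nat) (K : fieldType) (v : K -> int) (m : nat) (S : 'rV[K]_m -> Prop).

Local Notation gen := (gen K m).
Local Notation RS_zero := (RS_zero p v S).
Local Notation RS_eq := (RS_eq p v S).
Local Notation admissible := (admissible p v S).

Lemma RS_zero0 : RS_zero (fun _ => 0).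
Proof. by exists 0%N, (fun _ => 0), (fun _ _ => 0); split=> // g; rewrite big_ord0. Qed.

Lemma RS_zero_rel r : is_rel p v S r -> RS_zero r.
Proof.
move=> h; exists 1%N, (fun _ => 1), (fun _ => r); split; first by case.
by move=> g; rewrite big_ord1 mul1r.
Qed.

Lemma RS_zero_ext z z' : RS_zero z -> z =1 z' -> RS_zero z'.
Proof. by case=> N [c [r [h1 h2]]] e; exists N, c, r; split=> // g; rewrite -e. Qed.

Lemma RS_zeroD z1 z2 : RS_zero z1 -> RS_zero z2 -> RS_zero (fun g => z1 g + z2 g).
Proof.
case=> N1 [c1 [r1 [h1 e1]]] [N2 [c2 [r2 [h2 e2]]]].
pose glue (T : Type) (f1 f2 : nat -> T) i := if (i < N1)%N then f1 i else f2 (i - N1)%N.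
exists (N1 + N2)%N, (glue _ c1 c2), (glue _ r1 r2); split.
  move=> i hi; rewrite /glue; case: ifP => lt; first exact: h1.
  by apply: h2; rewrite ltn_subLR // leqNgt lt.
move=> g; rewrite big_split_ord /= e1 e2; congr (_ + _).
  by apply: eq_bigr => i _; rewrite /glue /= ltn_ord.
by apply: eq_bigr => i _; rewrite /glue /= ltnNge leq_addr /= addKn.
Qed.

Lemma RS_zeroZ c z : RS_zero z -> RS_zero (fun g => c * z g).
Proof.
case=> N [c1 [r [h e]]]; exists N, (fun i => c * c1 i), r; split=> // g.
by rewrite e mulr_sumr; apply: eq_bigr => i _; rewrite mulrA.
Qed.

Lemma RS_eq_refl a : RS_eq a a.
Proof. by apply: RS_zero_ext RS_zero0 _ => g; rewrite subrr. Qed.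

Lemma RS_eq_sym a b : RS_eq a b -> RS_eq b a.
Proof. by move=> h; apply: RS_zero_ext (RS_zeroZ (-1) h) _ => g; rewrite mulN1r opprB. Qed.

Lemma RS_eq_trans a b c : RS_eq a b -> RS_eq b c -> RS_eq a c.
Proof. by move=> h1 h2; apply: RS_zero_ext (RS_zeroD h1 h2) _ => g; rewrite addrA subrK. Qed.

Lemma RS_eqD a b c d : RS_eq a b -> RS_eq c d ->
  RS_eq (fun g => a g + c g) (fun g => b g + d g).
Proof. by move=> h1 h2; apply: RS_zero_ext (RS_zeroD h1 h2) _ => g; rewrite opprD addrACA. Qed.

Lemma RS_eq_ext a b a' b' : RS_eq a b -> a =1 a' -> b =1 b' -> RS_eq a' b'.
Proof. by move=> h e1 e2; apply: RS_zero_ext h _ => g; rewrite e1 e2. Qed.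

Lemma RS_eq_sum (I : eqType) (l : seq I) (F G : I -> gen -> int) :
  (forall i, i \in l -> RS_eq (F i) (G i)) ->
  RS_eq (fun g => \sum_(i <- l) F i g) (fun g => \sum_(i <- l) G i g).
Proof.
elim: l => [|i l IH] h.
  by apply: RS_eq_ext (RS_eq_refl (fun _ => 0)) _ _ => g; rewrite big_nil.
have hi := h i (mem_head i l).
have hl := IH (fun j hj => h j (introT orP (or_intror hj))).
by apply: RS_eq_ext (RS_eqD hi hl) _ _ => g; rewrite big_cons.
Qed.

Lemma mkgen_ext k (X Y : 'rV[K]_m -> 'rV[K]_k -> Prop) :
  (forall s x, X s x <-> Y s x) -> mkgen X = mkgen Y.
Proof.
move=> h; congr mkgen; apply: functional_extensionality => s.
by apply: functional_extensionality => x; apply: propositional_extensionality.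
Qed.

Lemma RS_eq_disjoint_union k (X1 X2 X : 'rV[K]_m -> 'rV[K]_k -> Prop) :
  admissible X1 -> admissible X2 -> (forall s x, ~ (X1 s x /\ X2 s x)) ->
  (forall s x, X s x <-> X1 s x \/ X2 s x) ->
  RS_eq (delta (mkgen X)) (fun g => delta (mkgen X1) g + delta (mkgen X2) g).
Proof.
move=> a1 a2 d e; rewrite (mkgen_ext e).
apply: RS_zero_ext (RS_zero_rel _) _; first by left; exists k, X1, X2; split.
by move=> g /=; rewrite opprD addrA.
Qed.

Lemma RS_eq_dim_lt k (X : 'rV[K]_m -> 'rV[K]_k -> Prop) :
  admissible X -> (forall s, S s -> dim_lt v (X s)) -> RS_eq (delta (mkgen X)) (fun _ => 0).
Proof.
move=> a d; apply: RS_zero_ext (RS_zero_rel _) _; first by right; left; exists k, X; split.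
by move=> g; rewrite subr0.
Qed.

Lemma RS_eq_measure_preserving k (X Y : 'rV[K]_m -> 'rV[K]_k -> Prop)
    (phi : 'rV[K]_m -> 'rV[K]_k -> 'rV[K]_k) :
  admissible X -> admissible Y ->
  definable v (fun z : 'rV[K]_((m + k) + (m + k)) =>
     X (lsubmx (lsubmx z)) (rsubmx (lsubmx z)) /\
     lsubmx (rsubmx z) = lsubmx (lsubmx z) /\
     rsubmx (rsubmx z) = phi (lsubmx (lsubmx z)) (rsubmx (lsubmx z))) ->
  (forall s, S s ->
     [/\ open_set v (X s) /\ open_set v (Y s),
         (forall x, X s x -> Y s (phi s x)),
         (forall x y, X s x -> X s y -> phi s x = phi s y -> x = y),
         (forall y, Y s y -> exists x, X s x /\ phi s x = y) &
         C1_jac1 v (X s) (phi s)]) ->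
  RS_eq (delta (mkgen X)) (delta (mkgen Y)).
Proof. by move=> aX aY dphi h; apply: RS_zero_rel; right; right; left; exists k, X, Y, phi. Qed.

Lemma RS_eq_timesZp k (X : 'rV[K]_m -> 'rV[K]_k -> Prop) :
  admissible X -> RS_eq (delta (mkgen X)) (delta (mkgen (timesZp v X))).
Proof. by move=> a; apply: RS_zero_rel; right; right; right; exists k, X. Qed.

End RSRelations.

Section ValuedField.
Variables (p : nat) (K : fieldType) (v : K -> int).
Hypothesis p_prime : prime p.
Hypothesis valM : forall x y, x != 0 -> y != 0 -> v (x * y) = v x + v y.
Hypothesis val_ultra : forall x y, x != 0 -> y != 0 -> x + y != 0 ->
  (v x <= v (x + y)) || (v y <= v (x + y)).
Hypothesis pK_neq0 : (p%:R : K) != 0.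
Hypothesis val_p : v p%:R = 1.
Hypothesis residue_nat : forall x, vge v x 0 -> exists k : nat, vge v (x - k%:R) 1.

Local Notation vge := (@vge K v).
Local Notation pK := (p%:R : K).

(** * Valuations *)

Lemma val1 : v 1 = 0.
Proof.
have := valM (oner_neq0 K) (oner_neq0 K); rewrite mulr1 => /eqP.
by rewrite -[X in X == _]addr0 => /eqP /addrI.
Qed.

Lemma valN1 : v (-1) = 0.
Proof.
have n1 : (-1 : K) != 0 by rewrite oppr_eq0 oner_neq0.
have := valM n1 n1; rewrite mulrNN mulr1 val1 => /esym/eqP.
by rewrite -mulr2n -mulr_natr mulf_eq0 => /orP [/eqP|].
Qed.

Lemma valN x : x != 0 -> v (- x) = v x.
Proof. by move=> nx; rewrite -mulN1r valM ?valN1 ?add0r ?oppr_eq0 ?oner_neq0. Qed.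

Lemma valV x : x != 0 -> v x^-1 = - v x.
Proof.
move=> nx; have := valM nx (invr_neq0 nx); rewrite mulfV // val1 => /eqP.
by rewrite eq_sym addr_eq0 => /eqP ->; rewrite opprK.
Qed.

Lemma valX x n : x != 0 -> v (x ^+ n) = v x *+ n.
Proof.
move=> nx; elim: n => [|n IH]; first by rewrite expr0 val1.
by rewrite exprS valM ?expf_neq0 // IH mulrS.
Qed.

Lemma pexpz_neq0 (z : int) : pK ^ z != 0.
Proof. by rewrite expfz_neq0. Qed.

Lemma val_pexpz (z : int) : v (pK ^ z) = z.
Proof.
case: z => n; first by rewrite -exprnP valX // val_p natz.
by rewrite NegzE -exprnN valV ?expf_neq0 // valX // val_p natz.
Qed.

Lemma pexpzNK (z : int) y : y * pK ^ (- z) * pK ^ z = y.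
Proof. by rewrite -mulrA -expfzDr // addNr expr0z mulr1. Qed.

Lemma val_addr_strict x y : x != 0 -> (y == 0) || (v x < v y) ->
  x + y != 0 /\ v (x + y) = v x.
Proof.
move=> nx; case: (eqVneq y 0) => [-> _|ny /= lt_xy]; first by rewrite addr0.
have nxy : x + y != 0.
  apply: contraTneq lt_xy => /eqP; rewrite addr_eq0 => /eqP ->.
  by rewrite valN ?oppr_eq0 // ltxx.
split => //; apply/eqP; rewrite eq_le; apply/andP; split.
  have nny : - y != 0 by rewrite oppr_eq0.
  have := val_ultra nxy nny; rewrite addrK valN // => /(_ nx) /orP [] //.
  by move=> le_yx; move: (lt_le_trans lt_xy le_yx); rewrite ltxx.
by case/orP: (val_ultra nx ny nxy) => // /(le_trans (ltW lt_xy)).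
Qed.

Lemma vgeE x k : x != 0 -> vge x k <-> k <= v x.
Proof. by move=> nx; split=> [[/eqP|] //|]; [rewrite (negbTE nx)|right]. Qed.

Lemma vgeW x k k' : k' <= k -> vge x k -> vge x k'.
Proof. by move=> le_k [->|h]; [left|right; apply: le_trans h]. Qed.

Lemma vgeN x k : vge x k -> vge (- x) k.
Proof.
case: (eqVneq x 0) => [->|nx]; first by rewrite oppr0; left.
by rewrite !vgeE ?oppr_eq0 // valN.
Qed.

Lemma vgeD x y k : vge x k -> vge y k -> vge (x + y) k.
Proof.
case: (eqVneq x 0) => [-> _|nx]; first by rewrite add0r.
case: (eqVneq y 0) => [-> h _|ny]; first by rewrite addr0.
case: (eqVneq (x + y) 0) => [-> _ _|nxy]; first by left.
rewrite !vgeE // => hx hy.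
by case/orP: (val_ultra nx ny nxy); [apply: le_trans hx|apply: le_trans hy].
Qed.

Lemma vgeB x y k : vge x k -> vge y k -> vge (x - y) k.
Proof. by move=> hx /vgeN; apply: vgeD. Qed.

Lemma vgeM x y k1 k2 : vge x k1 -> vge y k2 -> vge (x * y) (k1 + k2).
Proof.
case: (eqVneq x 0) => [-> _|nx]; first by rewrite mul0r; left.
case: (eqVneq y 0) => [-> _ _|ny]; first by rewrite mulr0; left.
by rewrite !vgeE ?mulf_neq0 // valM // => h1 h2; apply: lerD.
Qed.

Lemma vgeM0 x y k : vge x 0 -> vge y k -> vge (x * y) k.
Proof. by move=> hx hy; rewrite -[k]add0r; apply: vgeM. Qed.

Lemma vge1 : vge 1 0. Proof. by right; rewrite val1. Qed.

Lemma vge_nat k : vge k%:R 0.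
Proof. by elim: k => [|k IH]; [left|rewrite mulrS; apply: vgeD IH; apply: vge1]. Qed.

Lemma vgeX x n : vge x 0 -> vge (x ^+ n) 0.
Proof.
move=> hx; elim: n => [|n IH]; first by rewrite expr0; apply: vge1.
by rewrite exprS; apply: vgeM0.
Qed.

Lemma vge_pexpz (z : int) : vge (pK ^ z) z.
Proof. by right; rewrite val_pexpz. Qed.

Lemma vge_mulpl x k : vge x k -> vge (pK * x) (k + 1).
Proof. by move=> h; rewrite addrC; apply: vgeM h; right; rewrite val_p. Qed.

Lemma vge_mulpexpz x k (z : int) : vge x k -> vge (x * pK ^ z) (k + z).
Proof. by move=> h; apply: vgeM h (vge_pexpz z). Qed.

Lemma vge_unit_mull u x k : u != 0 -> v u = 0 -> vge (u * x) k -> vge x k.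
Proof.
move=> nu vu; case: (eqVneq x 0) => [->|nx]; first by left.
by rewrite !vgeE ?mulf_neq0 // valM // vu add0r.
Qed.

Lemma unit_1D w : vge w 1 -> 1 + w != 0 /\ v (1 + w) = 0.
Proof.
move=> hw; rewrite -val1; apply: val_addr_strict; first exact: oner_neq0.
by case: (eqVneq w 0) => //= nw; move: hw; rewrite vgeE // val1.
Qed.

Definition congp (x y : K) := vge (x - y) 1.

Lemma congp_refl x : congp x x. Proof. by rewrite /congp subrr; left. Qed.

Lemma congp_sym x y : congp x y -> congp y x.
Proof. by move=> h; rewrite /congp -opprB; apply: vgeN. Qed.

Lemma congp_trans x y z : congp x y -> congp y z -> congp x z.
Proof. by move=> h1 h2; have := vgeD h1 h2; rewrite /congp addrA subrK. Qed.

Lemma congpD x y x' y' : congp x y -> congp x' y' -> congp (x + x') (y + y').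
Proof. by move=> h1 h2; have := vgeD h1 h2; rewrite /congp opprD addrACA. Qed.

Lemma congpB x y x' y' : congp x y -> congp x' y' -> congp (x - x') (y - y').
Proof.
move=> h1 h2; have := vgeB h1 h2; rewrite /congp.
by have -> : x - x' - (y - y') = x - y - (x' - y') by ring.
Qed.

Lemma congpM x y x' y' : vge x 0 -> vge y' 0 ->
  congp x y -> congp x' y' -> congp (x * x') (y * y').
Proof.
move=> hx hy' h1 h2; rewrite /congp.
have -> : x * x' - y * y' = x * (x' - y') + (x - y) * y' by ring.
by apply: vgeD; [apply: vgeM0|rewrite -(addr0 (1 : int)); apply: vgeM].
Qed.

Lemma congpX x y n : vge x 0 -> vge y 0 -> congp x y -> congp (x ^+ n) (y ^+ n).
Proof.
move=> hx hy h; elim: n => [|n IH]; first exact: congp_refl.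
by rewrite !exprS; apply: congpM => //; apply: vgeX.
Qed.

Lemma vge0_congp x y : vge y 0 -> congp x y -> vge x 0.
Proof. by move=> hy h; rewrite -(subrK y x); apply: vgeD (vgeW _ h) hy. Qed.

Lemma vge1_congp x y : vge y 1 -> congp x y -> vge x 1.
Proof. by move=> hy h; rewrite -(subrK y x); apply: vgeD. Qed.

Lemma congp_nat (a b : nat) : a = b %[mod p] -> congp a%:R b%:R.
Proof.
move=> e; rewrite /congp (divn_eq a p) (divn_eq b p) e !natrD !natrM.
rewrite opprD addrACA subrr addr0 -mulrBl mulrC -(add0r (1 : int)).
by apply: vge_mulpl; apply: vgeB; apply: vge_nat.
Qed.

Lemma unit_nat d : (0 < d < p)%N -> (d%:R : K) != 0 /\ v d%:R = 0.
Proof.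
move=> /andP [d0 dp].
have /eqP cop : coprime d p by rewrite coprime_sym prime_coprime // gtnNdvd.
case: (egcdnP p d0) => km kn e _; rewrite cop in e.
have eK : (km%:R * d%:R : K) = kn%:R * pK + 1 by rewrite -!natrM e natrD.
have ndiv : ~ vge (d%:R : K) 1.
  move=> h; suff : vge (1 : K) 1 by rewrite vgeE ?oner_neq0 // val1.
  have -> : (1 : K) = km%:R * d%:R - pK * kn%:R by rewrite eK mulrC addrAC subrr add0r.
  apply: vgeB; first by apply: vgeM0 h; apply: vge_nat.
  by rewrite -(add0r (1 : int)); apply/vge_mulpl/vge_nat.
have nd : (d%:R : K) != 0 by apply: contra_notN ndiv => /eqP ->; left.
split => //; apply/eqP; rewrite eq_le; apply/andP; split; last by apply/vgeE => //; apply: vge_nat.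
by rewrite leNgt; apply/negP => h1; apply: ndiv; rewrite vgeE.
Qed.

Lemma congp_nat_inj d1 d2 : (d1 < p)%N -> (d2 < p)%N -> congp d1%:R d2%:R -> d1 = d2.
Proof.
wlog le21 : d1 d2 / (d2 <= d1)%N.
  move=> W h1 h2 hc; case: (leqP d2 d1) => h; first exact: W.
  by apply/esym/W => //; [exact: ltnW|exact: congp_sym].
move=> h1 h2 hc; apply/eqP; rewrite eqn_leq le21 andbT leqNgt; apply/negP => lt21.
have [nz vz] : let d := (d1 - d2)%N in (d%:R : K) != 0 /\ v d%:R = 0.
  by apply: unit_nat; rewrite subn_gt0 lt21 (leq_ltn_trans (leq_subr _ _) h1).
by move: hc; rewrite /congp -natrB ?vgeE // vz.
Qed.

Lemma residue u : vge u 0 -> exists2 j, (j < p)%N & congp u j%:R.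
Proof.
case/residue_nat => k hk; exists (k %% p)%N; first by rewrite ltn_mod prime_gt0.
by apply: congp_trans hk _; apply: congp_nat; rewrite modn_mod.
Qed.

Lemma unit_residue u : u != 0 -> v u = 0 -> exists2 j, (0 < j < p)%N & congp u j%:R.
Proof.
move=> nu vu; have [|j jp hj] := @residue u; first by right; rewrite vu.
exists j => //; rewrite jp andbT lt0n; apply/eqP => j0.
by move: hj; rewrite j0 /congp subr0 vgeE // vu.
Qed.

Lemma unit_expp1 u : u != 0 -> v u = 0 -> congp (u ^+ p.-1) 1.
Proof.
move=> nu vu; have [j hj cj] := unit_residue nu vu.
have [nj vj] := unit_nat hj.
apply: (@congp_trans _ (j%:R ^+ p.-1)).
  by apply: congpX => //; [right; rewrite vu|apply: vge_nat].
apply: (vge_unit_mull nj vj).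
have := congp_nat (fermat_little j p_prime); rewrite /congp natrX.
by rewrite -{1}(prednK (prime_gt0 p_prime)) exprS mulrBr mulr1.
Qed.

Local Notation ac1 := (ac_one p v).

Lemma ac1_neq0 x : ac1 x -> x != 0. Proof. by case. Qed.

Lemma ac1_congp x : ac1 x -> congp (x * pK ^ (- v x)) 1. Proof. by case. Qed.

Lemma ac1_of_congp y (lam : int) : congp (y * pK ^ (- lam)) 1 -> ac1 y /\ v y = lam.
Proof.
set u := y * pK ^ (- lam) => h.
have [nu vu] : u != 0 /\ v u = 0 by have := unit_1D h; rewrite addrC subrK.
have ey : y = u * pK ^ lam by rewrite /u pexpzNK.
have vy : v y = lam by rewrite ey valM ?pexpz_neq0 // vu val_pexpz add0r.
by split=> //; split; [rewrite ey mulf_neq0 ?pexpz_neq0|rewrite vy].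
Qed.

(** Since [ac] is not a term of the language, [ac x = 1] is defined through
    this decomposition: the [(p-1)]-th powers have angular component [1] and
    all valuations divisible by [p-1], and [p^r] supplies the remainder. *)
Lemma ac1_decomp x : ac1 x -> exists y t (r : nat),
  [/\ y != 0, vge t 0, (r < p.-1)%N & x = y ^+ p.-1 * pK ^+ r * (1 + pK * t)].
Proof.
case=> nx hw; set w := x * pK ^ (- v x) in hw.
have p1 : (0 : int) < (p.-1)%:Z by rewrite ltz_nat -subn1 subn_gt0 prime_gt1.
set t := (w - 1) * pK ^ (-1).
have wt : w = 1 + pK * t.
  by rewrite /t exprN1 mulrCA mulfV // mulr1 addrC subrK.
set q := ((v x) %/ (p.-1)%:Z)%Z; set r := ((v x) %% (p.-1)%:Z)%Z.
have r0 : 0 <= r by rewrite /r modz_ge0 // lt0r_neq0.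
exists (pK ^ q), t, `|r|%N; split.
- exact: pexpz_neq0.
- by rewrite /t -(subrr (1 : int)); apply: vge_mulpexpz.
- by rewrite -ltz_nat gez0_abs // ltz_pmod.
have -> : (pK ^ q) ^+ p.-1 * pK ^+ `|r|%N = pK ^ (v x).
  rewrite exprnP exprz_exp exprnP gez0_abs // -expfzDr //.
  by rewrite [v x in RHS](divz_eq (v x) (p.-1)%:Z).
by rewrite -wt /w mulrCA -expfzDr // subrr expr0z mulr1.
Qed.

Lemma ac1_of_decomp y t (r : nat) : y != 0 -> vge t 0 ->
  ac1 (y ^+ p.-1 * pK ^+ r * (1 + pK * t)).
Proof.
move=> ny ht; set u := y * pK ^ (- v y).
have [nu vu] : u != 0 /\ v u = 0.
  by rewrite mulf_neq0 ?pexpz_neq0 // valM ?pexpz_neq0 // val_pexpz subrr.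
set lam := v y *+ p.-1 + r%:Z.
suff : congp (y ^+ p.-1 * pK ^+ r * (1 + pK * t) * pK ^ (- lam)) 1 by case/ac1_of_congp.
have -> : y ^+ p.-1 * pK ^+ r * (1 + pK * t) * pK ^ (- lam) = u ^+ p.-1 * (1 + pK * t).
  have E : (pK ^ v y) ^+ p.-1 * pK ^+ r * pK ^ (- lam) = 1.
    rewrite exprnP exprz_exp exprnP -expfzDr // -expfzDr //.
    by rewrite /lam -[(p.-1)%:Z]natz mulrnAr mulr1 subrr expr0z.
  have ey : y = u * pK ^ v y by rewrite /u pexpzNK.
  rewrite {1}ey exprMn.
  transitivity (u ^+ p.-1 * (1 + pK * t) *
    ((pK ^ v y) ^+ p.-1 * pK ^+ r * pK ^ (- lam))); first by ring.
  by rewrite E mulr1.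
rewrite -[1 in X in congp _ X]mulr1; apply: congpM.
- by apply: vgeX; right; rewrite vu.
- exact: vge1.
- exact: unit_expp1.
- by rewrite /congp addrC addKr -(add0r (1 : int)); apply: vge_mulpl.
Qed.

Local Notation fo_def := (fo_def v).

Lemma fo_def_ac1 i b : (i < b)%N -> fo_def (fun e => ac1 (e i)).
Proof.
move=> ib; pose decomp r := TMul (TMul (tpow (TVar b) p.-1) (tpow (tnat p) r))
  (TAdd TOne (TMul (tnat p) (TVar b.+1))).
have H := fo_def_ex b (fo_def_ex b.+1 (fo_def_and (fo_def_not (fo_def_eq v (TVar b) TZero))
  (fo_def_and (fo_def_O v (TVar b.+1)) (fo_def_has_seq (iota 0 p.-1)
    (fun r => fo_def_eq v (TVar i) (decomp r)))))).
apply: (fo_def_ext H) => e /=.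
have nbi : i != b by rewrite neq_ltn ib.
have nb1i : i != b.+1 by rewrite neq_ltn ltnS ltnW.
have nb1b : b != b.+1 by rewrite neq_ltn ltnSn.
have updE y t : [/\ upd (upd e b y) b.+1 t b = y, upd (upd e b y) b.+1 t b.+1 = t
    & upd (upd e b y) b.+1 t i = e i].
  by rewrite upd_id (upd_neq _ _ nb1b) upd_id !(upd_neq _ _ nb1i) (upd_neq _ _ nbi).
split.
  case=> y [t]; case: (updE y t) => ey et ei /=.
  rewrite ey et => -[/eqP ny [ht [r _]]].
  rewrite !tpowE tnatE /= ey ei => ->.
  exact: ac1_of_decomp.
case/ac1_decomp=> y [t [r [ny ht hr xe]]]; exists y, t.
case: (updE y t) => ey et ei /=; rewrite ey et.
split; first exact/eqP.
split=> //; exists r; first by rewrite mem_iota.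
by rewrite /= !tpowE tnatE /= ey ei.
Qed.

Lemma fo_def_dvdO i j b : (i < b)%N -> (j < b)%N ->
  fo_def (fun e => exists t, inO v t /\ t * e i = e j).
Proof.
move=> ib jb; have nbi : i != b by rewrite neq_ltn ib.
have nbj : j != b by rewrite neq_ltn jb.
apply: (fo_def_ext (fo_def_ex b (fo_def_and (fo_def_O v (TVar b))
  (fo_def_eq v (TMul (TVar b) (TVar i)) (TVar j))))) => e /=.
by split=> -[t h]; exists t; move: h; rewrite /= upd_id !(upd_neq _ _ nbi) !(upd_neq _ _ nbj).
Qed.

Lemma val_le_dvdO x y t : y != 0 -> inO v t -> t * x = y -> v x <= v y.
Proof.
move=> ny ht exy; have /norP [nt nx] : ~~ ((t == 0) || (x == 0)) by rewrite -mulf_eq0 exy.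
by rewrite -exy valM // lerDr -vgeE.
Qed.

Definition ac1_diag n (y : 'I_n -> K) :=
  (forall j, ac1 (y j)) /\ exists lam : nat, forall j, v (y j) = lam%:Z.

Lemma ac1_diagP n (y : 'I_n -> K) :
  ac1_diag y <-> exists lam : nat, forall j, congp (y j * pK ^ (- lam%:Z)) 1.
Proof.
split=> [[ac [lam hl]]|[lam hl]].
  by exists lam => j; rewrite -(hl j); apply: ac1_congp.
by split=> [j|]; [|exists lam => j]; case: (ac1_of_congp (hl j)).
Qed.

(** Equality of valuations, expressed by divisibility in [Z_p]. *)
Lemma ac1_diagE n (y : 'I_n -> K) (j0 : 'I_n) : ac1_diag y <->
  [/\ forall j, ac1 (y j), forall j, inO v (y j) &
      forall j, (exists t, inO v t /\ t * y j = y j0) /\ (exists t, inO v t /\ t * y j0 = y j)].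
Proof.
have quot x z : x != 0 -> z != 0 -> v x = v z -> exists t, inO v t /\ t * x = z.
  move=> nx nz exz; exists (z / x); rewrite mulfVK //; split => //.
  by right; rewrite valM ?invr_eq0 // valV // exz subrr.
split.
  case=> ac [lam hl]; have ny j := ac1_neq0 (ac j).
  by split=> // [j|j]; [right; rewrite hl|split; apply: quot; rewrite ?hl].
case=> ac hO hdvd; split => //; have ny j := ac1_neq0 (ac j).
have v0 : 0 <= v (y j0) by move: (hO j0) => /(vgeE 0 (ny j0)).
exists `|v (y j0)|%N => j; rewrite gez0_abs //.
case: (hdvd j) => [[t1 [h1 e1]] [t2 [h2 e2]]].
by apply/eqP; rewrite eq_le (val_le_dvdO (ny _) h1 e1) (val_le_dvdO (ny _) h2 e2).
Qed.

Lemma fo_def_ac1_diag n (xp : 'I_n -> nat) b (j0 : 'I_n) : (forall j, xp j < b)%N ->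
  fo_def (fun e => ac1_diag (fun j => e (xp j))).
Proof.
move=> hb; apply: (fo_def_ext (fo_def_and (fo_def_all_fin (fun j => fo_def_ac1 (hb j)))
  (fo_def_and (fo_def_all_fin (fun j => fo_def_O v (TVar (xp j))))
  (fo_def_all_fin (fun j => fo_def_and (fo_def_dvdO (hb j) (hb j0))
                                       (fo_def_dvdO (hb j0) (hb j))))))) => e.
by rewrite (ac1_diagE _ j0); split=> [[? [? ?]]|[? ? ?]].
Qed.

(** * Leading digits and the shear maps *)

Section Shear.
Variable n' : nat.
Local Notation n := n'.+1.

Definition digits := {ffun 'I_n -> 'I_p}.

Definition nz_digits (a : digits) := [exists j, (a j : nat) != 0%N].

Definition pivot (a : digits) : 'I_n := odflt ord0 [pick j | (a j : nat) != 0%N].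

Definition pivot_digit (a : digits) : nat := a (pivot a).

Definition shear_coef (a : digits) (j : 'I_n) : K := (1 - (a j)%:R) / (pivot_digit a)%:R.

Definition shear_mx (a : digits) : 'M[K]_n :=
  \matrix_(i, j) ((i == j)%:R + (i == pivot a)%:R * shear_coef a j).

Definition shear (a : digits) (x : 'rV[K]_n) : 'rV[K]_n := x *m shear_mx a.

Definition unshear (a : digits) (y : 'rV[K]_n) : 'rV[K]_n :=
  \row_j (y 0 j - (1 - (a j)%:R) * y 0 (pivot a)).

Definition leading_digits (a : digits) (lam : nat) (x : 'rV[K]_n) :=
  forall j, congp (x 0 j * pK ^ (- lam%:Z)) (a j)%:R.

Lemma shearE a x j : shear a x 0 j = x 0 j + x 0 (pivot a) * shear_coef a j.
Proof.
rewrite /shear mxE; under eq_bigr do rewrite mxE mulrDr; rewrite big_split /=.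
congr (_ + _).
  rewrite (bigD1 j) //= eqxx mulr1 big1 ?addr0 // => i /negbTE ->.
  by rewrite mulr0.
rewrite (bigD1 (pivot a)) //= eqxx mul1r big1 ?addr0 // => i /negbTE ->.
by rewrite mul0r mulr0.
Qed.

Lemma pivot_digit_gt0 a : nz_digits a -> (0 < pivot_digit a < p)%N.
Proof.
move=> /existsP [j hj]; rewrite /pivot_digit /pivot ltn_ord andbT lt0n.
by case: pickP => [i hi|/(_ j) h] //=; rewrite hj in h.
Qed.

Lemma leading_digits_lt a b lam mu x : nz_digits a -> (lam < mu)%N ->
  leading_digits a lam x -> ~ leading_digits b mu x.
Proof.
case/existsP=> j hj lt_lm ha hb.
have e : x 0 j * pK ^ (- lam%:Z) = x 0 j * pK ^ (- mu%:Z) * pK ^ (mu%:Z - lam%:Z).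
  by rewrite -mulrA -expfzDr // addrA addNr add0r.
have h1 : vge (x 0 j * pK ^ (- lam%:Z)) 1.
  rewrite e; apply: vgeM0 (vge0_congp (vge_nat _) (hb j)) (vgeW _ (vge_pexpz _)).
  by lia.
have : congp (a j)%:R 0%:R.
  by rewrite /congp subr0; apply: vge1_congp h1 (congp_sym (ha j)).
by move/(congp_nat_inj (ltn_ord _) (prime_gt0 p_prime)) => /eqP; apply/negP.
Qed.

Lemma leading_digits_uniq a b lam mu x : nz_digits a -> nz_digits b ->
  leading_digits a lam x -> leading_digits b mu x -> a = b.
Proof.
move=> na nb ha hb; case: (ltngtP lam mu) => [lt|lt|e].
- by case: (leading_digits_lt na lt ha hb).
- by case: (leading_digits_lt nb lt hb ha).
subst mu; apply/ffunP => j; apply: val_inj.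
by apply: congp_nat_inj (ltn_ord _) (ltn_ord _) (congp_trans (congp_sym (ha j)) (hb j)).
Qed.

Lemma leading_digits_exist (x : 'rV[K]_n) : (forall j, vge (x 0 j) 0) ->
  (exists j, x 0 j != 0) -> exists2 a, nz_digits a & exists lam, leading_digits a lam x.
Proof.
move=> hO [j1 hj1].
have [jm hjm hmin] :=
  @arg_minnP _ j1 (fun j : 'I_n => (x 0 j != 0)%R) (fun j => absz (v (x 0 j))) hj1.
set lam := absz (v (x 0 jm)).
have v0 j : x 0 j != 0 -> 0 <= v (x 0 j) by move=> nj; move: (hO j) => /(vgeE 0 nj).
have hv j : vge (x 0 j * pK ^ (- lam%:Z)) 0.
  rewrite -(subrr lam%:Z); apply: vge_mulpexpz.
  case: (eqVneq (x 0 j) 0) => [->|nj]; first by left.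
  by right; rewrite -(gez0_abs (v0 j nj)) lez_nat; apply: hmin.
have [d hd1 hd2] := fin_all_exists2 (fun j => residue (hv j)).
exists [ffun j => Ordinal (hd1 j)]; last by exists lam => j; rewrite ffunE.
apply/existsP; exists jm; rewrite ffunE /=; apply/eqP => d0.
have := hd2 jm; rewrite d0 /congp subr0 vgeE ?mulf_neq0 ?pexpz_neq0 //.
by rewrite valM ?pexpz_neq0 // val_pexpz /lam gez0_abs ?v0 // subrr.
Qed.

Lemma leading_digits_ge0 a lam x : leading_digits a lam x -> forall j, vge (x 0 j) 0.
Proof.
move=> h j; apply: vgeW (_ : 0 <= lam%:Z) _ => //.
by rewrite -(pexpzNK lam%:Z (x 0 j)) -[lam%:Z]add0r; apply/vge_mulpexpz/(vge0_congp (vge_nat _)).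
Qed.

Section Pivot.
Variable a : digits.
Hypothesis nza : nz_digits a.

Lemma pivot_digit_unit : ((pivot_digit a)%:R : K) != 0 /\ v (pivot_digit a)%:R = 0.
Proof. exact: unit_nat (pivot_digit_gt0 nza). Qed.

Lemma shear_coef_ge0 j : vge (shear_coef a j) 0.
Proof.
have [n0 v0] := pivot_digit_unit.
rewrite /shear_coef -(addr0 (0 : int)); apply: vgeM; first by apply: vgeB vge1 (vge_nat _).
by right; rewrite valV // v0 oppr0.
Qed.

Lemma pivot_digit_shear_coef j : (pivot_digit a)%:R * shear_coef a j = 1 - (a j)%:R.
Proof. by have [n0 _] := pivot_digit_unit; rewrite /shear_coef mulrC mulfVK. Qed.

Lemma pivot_digit_det : (pivot_digit a)%:R * (1 + shear_coef a (pivot a)) = 1 :> K.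
Proof. by rewrite mulrDr mulr1 pivot_digit_shear_coef addrC subrK. Qed.

Lemma shearK : cancel (shear a) (unshear a).
Proof.
move=> x; apply/rowP => j; rewrite mxE !shearE -(pivot_digit_shear_coef j).
transitivity (x 0 j + shear_coef a j * x 0 (pivot a) *
  (1 - (pivot_digit a)%:R * (1 + shear_coef a (pivot a)))); first by ring.
by rewrite pivot_digit_det subrr mulr0 addr0.
Qed.

Lemma unshearK : cancel (unshear a) (shear a).
Proof.
move=> y; apply/rowP => j; rewrite shearE !mxE.
rewrite -(pivot_digit_shear_coef (pivot a)) -(pivot_digit_shear_coef j).
transitivity (y 0 j + shear_coef a j * y 0 (pivot a) *
  (1 - (pivot_digit a)%:R * (1 + shear_coef a (pivot a)))); first by ring.
by rewrite pivot_digit_det subrr mulr0 addr0.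
Qed.

(** Both directions rest on [a_j + a_i c_j = 1]. *)
Lemma leading_digits_shear lam x :
  (forall j, congp (shear a x 0 j * pK ^ (- lam%:Z)) 1) -> leading_digits a lam x.
Proof.
move=> cy j; have [n0 _] := pivot_digit_unit.
have xpiv : x 0 (pivot a) = (pivot_digit a)%:R * shear a x 0 (pivot a).
  by rewrite shearE mulrDr mulrCA pivot_digit_shear_coef /pivot_digit; ring.
have -> : x 0 j = shear a x 0 j - (1 - (a j)%:R) * shear a x 0 (pivot a).
  by rewrite [shear a x 0 j]shearE xpiv -mulrA mulrCA pivot_digit_shear_coef; ring.
rewrite mulrBl -mulrA.
apply: (@congp_trans _ (1 - (1 - (a j)%:R) * 1)); last first.
  by rewrite mulr1 opprB addrC subrK; apply: congp_refl.
by apply: congpB (cy j) (congpM (vgeB vge1 (vge_nat _)) vge1 (congp_refl _) (cy _)).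
Qed.

Lemma shear_leading_digits lam x : leading_digits a lam x ->
  forall j, congp (shear a x 0 j * pK ^ (- lam%:Z)) 1.
Proof.
move=> h j; rewrite shearE mulrDl mulrAC.
apply: (@congp_trans _ ((a j)%:R + (pivot_digit a)%:R * shear_coef a j)); last first.
  by rewrite pivot_digit_shear_coef addrC subrK; apply: congp_refl.
apply: congpD (h j) (congpM _ (shear_coef_ge0 _) (h _) (congp_refl _)).
exact: vge0_congp (vge_nat _) (h _).
Qed.

Lemma leading_digits_pivot_neq0 lam x : leading_digits a lam x -> x 0 (pivot a) != 0.
Proof.
move=> h; apply/eqP => x0; have := h (pivot a); rewrite x0 mul0r -(mulr0n 1).
move/(congp_nat_inj (prime_gt0 p_prime) (ltn_ord _)) => e.
by have := pivot_digit_gt0 nza; rewrite /pivot_digit -e.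
Qed.

Lemma det_shear_mx : \det (shear_mx a) = 1 + shear_coef a (pivot a).
Proof.
set s := tperm (ord0 : 'I_n) (pivot a).
set A := col_perm s (row_perm s (shear_mx a)).
have <- : \det A = \det (shear_mx a).
  rewrite /A col_permE row_permE !detM det_perm det_perm odd_permV.
  by rewrite mulrC mulrA -expr2 sqrr_sign mul1r.
rewrite -det_tr det_trig; last first.
  apply/is_trig_mxP => i j lt; rewrite !mxE.
  have nj : j != ord0 by rewrite -lt0n; apply: leq_ltn_trans lt.
  have ns : s j != pivot a.
    by apply: contra nj => /eqP e; rewrite -(permK s j) e /s tpermV tpermR.
  have nij : s j != s i by rewrite (inj_eq perm_inj) eq_sym neq_ltn lt.
  by rewrite (negbTE ns) (negbTE nij) mul0r addr0.
rewrite (reindex_inj (@perm_inj _ s^-1)) /=.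
under eq_bigr do rewrite !mxE permKV.
rewrite (bigD1 (pivot a)) //= eqxx mul1r big1 ?mulr1 // => i /negbTE ne.
by rewrite eqxx ne mul0r addr0.
Qed.

Lemma det_shear_mx_unit : \det (shear_mx a) != 0 /\ v (\det (shear_mx a)) = 0.
Proof.
have [n0 v0] := pivot_digit_unit.
have -> : \det (shear_mx a) = ((pivot_digit a)%:R)^-1.
  by rewrite det_shear_mx; apply: (mulfI n0); rewrite pivot_digit_det mulfV.
by rewrite invr_eq0 n0 valV // v0 oppr0.
Qed.

Lemma C1_jac1_shear (X : 'rV[K]_n -> Prop) : C1_jac1 v X (shear a).
Proof.
exists (fun _ => shear_mx a); split.
- move=> x _ N; exists 0 => h _ _ t _ j.
  by rewrite /shear mulmxDl addrAC addrK subrr mxE; left.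
- by move=> x _ N; exists 0 => y _ _ i j; rewrite subrr; left.
- by move=> _ _; apply: det_shear_mx_unit.
Qed.

Lemma shear_ball x x' e : ball v x e x' -> ball v (shear a x) e (shear a x').
Proof.
move=> h j.
have -> : (shear a x' - shear a x) 0 j = shear a x' 0 j - shear a x 0 j by rewrite !mxE.
rewrite !shearE.
have -> : x' 0 j + x' 0 (pivot a) * shear_coef a j - (x 0 j + x 0 (pivot a) * shear_coef a j) =
          (x' 0 j - x 0 j) + (x' 0 (pivot a) - x 0 (pivot a)) * shear_coef a j by ring.
apply: vgeD; first by move: (h j); rewrite !mxE.
by rewrite -(addr0 e); apply: vgeM (shear_coef_ge0 _); move: (h (pivot a)); rewrite !mxE.
Qed.

End Pivot.
End Shear.

Lemma geometric_sum_le2 (r : rat) : 0 <= r -> 2 * r <= 1 ->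
  forall N, \sum_(i < N) r ^+ i <= 2.
Proof.
move=> r0 r1; suff H N : \sum_(i < N) r ^+ i + 2 * r ^+ N <= 2.
  by move=> N; apply: le_trans (H N); rewrite lerDl mulr_ge0 ?exprn_ge0.
elim: N => [|N IH]; first by rewrite big_ord0 expr0 add0r mulr1.
rewrite big_ord_recr /= exprSr.
have : 2 * (r ^+ N * r) <= r ^+ N.
  by rewrite mulrCA -[X in _ <= X]mulr1 ler_wpM2l ?exprn_ge0.
by move: IH; lra.
Qed.

Lemma fin_meas_Zp k (A : 'rV[K]_k -> Prop) : (0 < k)%N ->
  (forall x, A x -> forall j, vge (x 0 j) 0) -> fin_meas p v A.
Proof.
move=> k0 hA; exists (fun _ => 0), (fun i => i%:Z); split.
  by move=> x hx; exists 0%N => j; rewrite !mxE subr0; apply: hA.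
exists 2 => N; set q : rat := p%:R ^+ k.
have p2 : (2 : rat) <= p%:R by rewrite ler_nat prime_gt1.
have hq : 2 <= q.
  apply: (le_trans p2); rewrite /q -(prednK k0) exprS -[X in X <= _]mulr1.
  by apply: ler_wpM2l; [apply: le_trans p2|apply: exprn_ege1; apply: le_trans p2].
have q0 : 0 < q by apply: lt_le_trans hq.
have r0 : 0 <= q^-1 by rewrite invr_ge0 ltW.
have r1 : 2 * q^-1 <= 1 by have := ler_wpM2r r0 hq; rewrite mulfV ?lt0r_neq0.
apply: le_trans (geometric_sum_le2 r0 r1 N); rewrite le_eqVlt; apply/orP; left.
by apply/eqP/eq_bigr => i _; rewrite /q exprVn -exprM exprnN PoszM.
Qed.

Lemma dim_lt_origin k (A : 'rV[K]_k -> Prop) : (0 < k)%N ->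
  (forall x, A x -> forall j, x 0 j = 0) -> dim_lt v A.
Proof.
move=> k0 hA [|d] f injf [a [e H]] //.
have b1 : ball v a e a by move=> j; rewrite !mxE subrr; left.
set y := \row_j (a 0 j + (j == ord0)%:R * pK ^ e) : 'rV[K]_d.+1.
have b2 : ball v a e y.
  move=> j; rewrite !mxE addrC addKr; case: (j == ord0); last by rewrite mul0r; left.
  by rewrite mul1r; apply: vge_pexpz.
have [x1 [h1 e1]] := H a b1; have [x2 [h2 e2]] := H y b2.
move: (e1 ord0) (e2 ord0); rewrite (hA _ h1) (hA _ h2) mxE eqxx mul1r => <-.
by rewrite add0r => /eqP; rewrite eq_sym (negbTE (pexpz_neq0 e)).
Qed.

(** * The cell decomposition of [S x Z_p^n] *)

Section Cells.
Variables (m : nat) (S : 'rV[K]_m -> Prop).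
Hypothesis S_def : definable v S.
Variable n' : nat.
Local Notation n := n'.+1.
Local Notation digits := (digits n').
Local Notation Pd := (@P_diag p K v m S n).
Local Notation admissible := (admissible p v S).
Local Notation RS_eq := (RS_eq p v S).

Definition ZpN k s (x : 'rV[K]_k) := S s /\ forall j, inO v (x 0 j).

Definition origin s (x : 'rV[K]_n) := S s /\ forall j, x 0 j = 0.

Definition cell (a : digits) s x := Pd s (shear a x).

Definition cells (l : seq digits) s x := exists2 a, a \in l & cell a s x.

Definition zero_digits : digits := [ffun _ => Ordinal (prime_gt0 p_prime)].

Definition nz_digit_vectors := enum (predC1 zero_digits).

Lemma nz_digitsP a : a \in nz_digit_vectors -> nz_digits a.
Proof.
rewrite mem_enum /= => nza; apply: contraNT nza => /existsPn h.
by apply/eqP/ffunP => j; rewrite ffunE; apply/val_inj/eqP/negbNE/h.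
Qed.

Lemma size_nz_digit_vectors : size nz_digit_vectors = (p ^ n).-1.
Proof. by rewrite -cardE cardC1 card_ffun !card_ord. Qed.

Lemma cell_leading_digits a s x : nz_digits a -> cell a s x ->
  S s /\ exists lam, leading_digits a lam x.
Proof.
move=> nza [hs /ac1_diagP [lam hl]]; split=> //.
by exists lam; apply: leading_digits_shear.
Qed.

Lemma cell_ge0 a s x : nz_digits a -> cell a s x -> forall j, vge (x 0 j) 0.
Proof. by move=> nza /(cell_leading_digits nza) [_ [lam /leading_digits_ge0]]. Qed.

Lemma cell_of_leading_digits a s lam x : nz_digits a -> S s ->
  leading_digits a lam x -> cell a s x.
Proof.
by move=> nza hs h; split=> //; apply/ac1_diagP; exists lam; apply: shear_leading_digits.
Qed.

Lemma ZpN_partition s (x : 'rV[K]_n) :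
  ZpN s x <-> origin s x \/ cells nz_digit_vectors s x.
Proof.
split=> [[hs hO]|[[hs h0]|[a ha hw]]]; last 2 first.
- by split=> // j; rewrite h0; left.
- by split; [case: hw|apply: cell_ge0 (nz_digitsP ha) hw].
case: (boolP [forall j, x 0 j == 0]) => [/forallP h|/forallPn [j hj]].
  by left; split=> // j; apply/eqP.
have [a nza [lam hd]] := leading_digits_exist hO (ex_intro _ j hj).
right; exists a; last exact: cell_of_leading_digits hs hd.
rewrite mem_enum /=; apply: contraTneq nza => ->.
by apply/existsPn => i; rewrite ffunE.
Qed.

Lemma origin_cells_disjoint s x : ~ (origin s x /\ cells nz_digit_vectors s x).
Proof.
case=> [[_ h0] [a ha hw]]; have nza := nz_digitsP ha.
have [_ [lam hd]] := cell_leading_digits nza hw.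
by have := leading_digits_pivot_neq0 nza hd; rewrite h0 eqxx.
Qed.

Lemma cells_cons a l s x : cells (a :: l) s x <-> cell a s x \/ cells l s x.
Proof.
split=> [[b]|[h|[b hb h]]]; first by rewrite in_cons => /orP [/eqP ->|hb] h; [left|right; exists b].
  by exists a; rewrite ?mem_head.
by exists b; rewrite // in_cons hb orbT.
Qed.

Lemma cell_cells_disjoint a l s x : nz_digits a -> {in l, forall b, nz_digits b} ->
  a \notin l -> ~ (cell a s x /\ cells l s x).
Proof.
move=> nza hl nal [hw [b hb hw']].
have [_ [lam hd]] := cell_leading_digits nza hw.
have [_ [mu hd']] := cell_leading_digits (hl b hb) hw'.
by move: nal; rewrite (leading_digits_uniq nza (hl b hb) hd hd') hb.
Qed.

Lemma P_diag_open s y : Pd s y -> exists e, forall y', ball v y e y' -> Pd s y'.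
Proof.
case=> hs /ac1_diagP [lam hl]; exists (lam%:Z + 1) => y' hb; split=> //.
apply/ac1_diagP; exists lam => j; apply: congp_trans (hl j).
have := vge_mulpexpz (- lam%:Z) (hb j).
by rewrite !mxE /congp -mulrBl addrAC subrr add0r.
Qed.

Lemma ac1_diag_ext k (y y' : 'I_k -> K) : y =1 y' -> ac1_diag y <-> ac1_diag y'.
Proof. by move=> /functional_extensionality ->. Qed.

Lemma fo_def_ZpN k : fo_def (fun e => ZpN (rowe 0 m e) (rowe m k e)).
Proof.
apply: (fo_def_ext (fo_def_and (fo_def_rowe S_def)
  (fo_def_all_fin (fun j : 'I_k => fo_def_O v (TVar (m + j)))))) => e.
by split=> -[hs h]; split=> // j; move: (h j); rewrite mxE.
Qed.

Lemma fo_def_origin : fo_def (fun e => origin (rowe 0 m e) (rowe m n e)).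
Proof.
apply: (fo_def_ext (fo_def_and (fo_def_rowe S_def)
  (fo_def_all_fin (fun j : 'I_n => fo_def_eq v (TVar (m + j)) TZero)))) => e.
by split=> -[hs h]; split=> // j; move: (h j); rewrite mxE.
Qed.

Lemma fo_def_P_diag_at b :
  fo_def (fun e => S (rowe 0 m e) /\ ac1_diag (fun j : 'I_n => e (b + j)%N)).
Proof.
apply: (fo_def_and (fo_def_rowe S_def) (@fo_def_ac1_diag n _ (b + n) ord0 _)).
by move=> j; rewrite ltn_add2l.
Qed.

Lemma fo_def_P_diag : fo_def (fun e => Pd (rowe 0 m e) (rowe m n e)).
Proof.
apply: (fo_def_ext (fo_def_P_diag_at m)) => e.
by rewrite (ac1_diag_ext (y' := fun j => rowe m n e 0 j)) // => j; rewrite mxE.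
Qed.

Lemma shear_coord_eq (a : digits) (y xj xp : K) j : nz_digits a ->
  (pivot_digit a)%:R * y + (a j)%:R * xp = (pivot_digit a)%:R * xj + xp <->
  y = xj + xp * shear_coef a j.
Proof.
move=> nza; have [n0 _] := pivot_digit_unit nza.
have h := pivot_digit_shear_coef nza j.
split=> [e|->]; last by rewrite mulrDr mulrCA h; ring.
apply: (mulfI n0); rewrite mulrDr mulrCA h.
transitivity ((pivot_digit a)%:R * y + (a j)%:R * xp - (a j)%:R * xp); first by ring.
by rewrite e; ring.
Qed.

(** The [j]-th coordinate equation of [y = shear a x], cleared of denominators. *)
Lemma fo_def_shear_coord (a : digits) yi xi j : nz_digits a ->
  fo_def (fun e => e yi = e xi + e (m + pivot a)%N * shear_coef a j).
Proof.
move=> nza; exists (FEq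
  (TAdd (TMul (tnat (pivot_digit a)) (TVar yi)) (TMul (tnat (a j)) (TVar (m + pivot a))))
  (TAdd (TMul (tnat (pivot_digit a)) (TVar xi)) (TVar (m + pivot a)))).
by move=> e; rewrite /= !tnatE shear_coord_eq.
Qed.

Lemma fo_def_cell (a : digits) b : nz_digits a -> (m + n <= b)%N ->
  fo_def (fun e => cell a (rowe 0 m e) (rowe m n e)).
Proof.
move=> nza hb.
have H := fo_def_exF b n (fo_def_and (fo_def_P_diag_at b)
  (fo_def_all_fin (fun j : 'I_n => fo_def_shear_coord (b + j) (m + j) j nza))).
apply: (fo_def_ext H) => e.
have lt_mb (j : 'I_n) : (m + j < b)%N by apply: leq_trans hb; rewrite ltn_add2l.
have le_mb : (0 + m <= b)%N by apply: leq_trans hb; rewrite leq_addr.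
split.
  case=> y [[hs hP] heq]; rewrite rowe_updF // in hs; split=> //.
  apply: (ac1_diag_ext _).1 hP => j; move: (heq j).
  by rewrite updF_in // !updF_lt // shearE !mxE.
case=> hs hP; exists (fun i => shear a (rowe m n e) 0 (inord (i - b))).
split; first split.
- by rewrite rowe_updF.
- by apply: (ac1_diag_ext _).1 hP => j; rewrite updF_in // addKn inord_val.
- by move=> j; rewrite updF_in // !updF_lt // addKn inord_val shearE !mxE.
Qed.

Lemma fo_def_cells l : {in l, forall a, nz_digits a} ->
  fo_def (fun e => cells l (rowe 0 m e) (rowe m n e)).
Proof.
move=> hl; have H a : fo_def (fun e => nz_digits a /\ cell a (rowe 0 m e) (rowe m n e)).
  case: (boolP (nz_digits a)) => nza.
    by apply: (fo_def_ext (fo_def_cell nza (leqnn _))) => e; split=> // -[].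
  by apply: (fo_def_ext (fo_def_False v)) => e; split=> // -[].
apply: (fo_def_ext (fo_def_has_seq l H)) => e.
by split=> -[a ha hw]; exists a => //; [case: hw|split=> //; apply: hl].
Qed.

Lemma definable_shear_graph (a : digits) : nz_digits a ->
  definable v (fun z : 'rV[K]_((m + n) + (m + n)) =>
     cell a (lsubmx (lsubmx z)) (rsubmx (lsubmx z)) /\
     lsubmx (rsubmx z) = lsubmx (lsubmx z) /\
     rsubmx (rsubmx z) = shear a (rsubmx (lsubmx z))).
Proof.
move=> nza; have [f Hf] := fo_def_and (fo_def_cell nza (leqnn _)) (fo_def_and
  (fo_def_all_fin (fun i : 'I_m => fo_def_eq v (TVar (m + n + i)) (TVar i)))
  (fo_def_all_fin (fun j : 'I_n => fo_def_shear_coord (m + n + m + j) (m + j) j nza))).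
exists f => z; rewrite -Hf; set e := env_of z.
have -> : lsubmx (lsubmx z) = rowe 0 m e by rewrite -{1}(rowe_env_of z) !lsubmx_rowe.
have -> : rsubmx (lsubmx z) = rowe m n e by rewrite -{1}(rowe_env_of z) lsubmx_rowe rsubmx_rowe.
have -> : lsubmx (rsubmx z) = rowe (m + n) m e.
  by rewrite -{1}(rowe_env_of z) rsubmx_rowe lsubmx_rowe.
have -> : rsubmx (rsubmx z) = rowe (m + n + m) n e by rewrite -{1}(rowe_env_of z) !rsubmx_rowe.

split=> -[hw [h1 h2]]; split=> //; split.
- by move=> i; move/rowP: h1 => /(_ i); rewrite !mxE add0n.
- by move=> j; move/rowP: h2 => /(_ j); rewrite shearE !mxE.
- by apply/rowP => i; rewrite !mxE add0n; apply: h1.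
- by apply/rowP => j; rewrite shearE !mxE; apply: h2.
Qed.

Lemma admissible_ZpN k : (0 < k)%N -> admissible (@ZpN k).
Proof.
move=> k0; split; [exact: definable2_fo_def (fo_def_ZpN k)|by move=> s x []|].
by move=> s _; apply: fin_meas_Zp k0 _ => x [].
Qed.

Lemma admissible_origin : admissible origin.
Proof.
split; [exact: definable2_fo_def fo_def_origin|by move=> s x []|].
by move=> s _; apply: fin_meas_Zp (ltn0Sn _) _ => x [_ h] j; rewrite h; left.
Qed.

Lemma admissible_P_diag : admissible Pd.
Proof.
split; [exact: definable2_fo_def fo_def_P_diag|by move=> s x []|].
by move=> s _; apply: fin_meas_Zp (ltn0Sn _) _ => x [_ [_ [lam hl]]] j; right; rewrite hl.
Qed.

Lemma admissible_cell a : nz_digits a -> admissible (cell a).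
Proof.
move=> nza; split; [exact: definable2_fo_def (fo_def_cell nza (leqnn _))|by move=> s x []|].
by move=> s _; apply: fin_meas_Zp (ltn0Sn _) _ => x; apply: cell_ge0.
Qed.

Lemma admissible_cells l : {in l, forall a, nz_digits a} -> admissible (cells l).
Proof.
move=> hl; split; [exact: definable2_fo_def (fo_def_cells hl)|by move=> s x [a _ []]|].
by move=> s _; apply: fin_meas_Zp (ltn0Sn _) _ => x [a ha]; apply/cell_ge0/hl.
Qed.

Lemma timesZp_ZpN k s (z : 'rV[K]_(k + 1)) : timesZp v (@ZpN k) s z <-> ZpN s z.
Proof.
split=> [[[hs h1] h2]|[hs h]]; last by split; [split=> // i|]; rewrite mxE; apply: h.
split=> // j; case: (splitP j) => [i ei|i ei].
  by move: (h1 i); rewrite mxE; congr (vge (z 0 _) 0); apply: val_inj.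
move: h2; rewrite mxE; congr (vge (z 0 _) 0); apply: val_inj.
by rewrite /= ei; case: i {ei} => -[].
Qed.

Lemma RS_eq_ZpN k : RS_eq (delta (mkgen (@ZpN 1))) (delta (mkgen (@ZpN k.+1))).
Proof.
elim: k => [|k IH]; first exact: RS_eq_refl.
apply: (RS_eq_trans IH); have := RS_eq_timesZp (admissible_ZpN (ltn0Sn k)).
by rewrite (mkgen_ext (@timesZp_ZpN k.+1)) addn1.
Qed.

Lemma RS_eq_cells l : uniq l -> {in l, forall a, nz_digits a} ->
  RS_eq (delta (mkgen (cells l))) (fun g => \sum_(a <- l) delta (mkgen (cell a)) g).
Proof.
elim: l => [|a l IH] ul hl.
  apply: RS_eq_ext (RS_eq_dim_lt (admissible_cells hl) _) _ _ => // [s _|g].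
    by apply: dim_lt_origin (ltn0Sn _) _ => x [a].
  by rewrite big_nil.
case/andP: ul => nal ul.
have hl' : {in l, forall b, nz_digits b} by move=> b hb; apply: hl; rewrite in_cons hb orbT.
have nza : nz_digits a by apply: hl; rewrite mem_head.
apply: RS_eq_trans (RS_eq_disjoint_union (admissible_cell nza) (admissible_cells hl')
  (fun s x => cell_cells_disjoint nza hl' nal) (@cells_cons a l)) _.
apply: RS_eq_ext (RS_eqD (RS_eq_refl _ _ _ (delta (mkgen (cell a)))) (IH ul hl')) _ _ => // g.
by rewrite big_cons.
Qed.

Lemma RS_eq_cell a : nz_digits a -> RS_eq (delta (mkgen (cell a))) (delta (mkgen Pd)).
Proof.
move=> nza; apply: (@RS_eq_measure_preserving _ _ _ _ _ _ _ _ (fun _ => shear a)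
  (admissible_cell nza) admissible_P_diag (definable_shear_graph nza)) => s hs.
split=> //.
- split=> [x hx|y]; last exact: P_diag_open.
  have [e He] := P_diag_open hx; exists e => y hy; exact/He/shear_ball.
- by move=> x y _ _; apply: (can_inj (shearK nza)).
- by move=> y hy; exists (unshear a y); rewrite /cell unshearK.
- exact: C1_jac1_shear.
Qed.

Lemma RS_eq_origin : RS_eq (delta (mkgen origin)) (fun _ => 0).
Proof.
apply: RS_eq_dim_lt admissible_origin _ => s _.
by apply: dim_lt_origin (ltn0Sn _) _ => x [].
Qed.

Lemma RS_eq_ZpN_cells :
  RS_eq (delta (mkgen (@ZpN n))) (delta (mkgen (cells nz_digit_vectors))).
Proof.
apply: RS_eq_trans (RS_eq_disjoint_union admissible_origin (admissible_cells nz_digitsP)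
  origin_cells_disjoint ZpN_partition) _.
by apply: RS_eq_ext (RS_eqD RS_eq_origin (RS_eq_refl _ _ _ _)) _ _ => // g; apply: add0r.
Qed.

Lemma RS_eq_P_diag :
  RS_eq (fun g => ((p ^ n)%:Z - 1) * delta (mkgen Pd) g) (RS_one v S).
Proof.
apply: RS_eq_trans (_ : RS_eq _ (fun g => \sum_(a <- nz_digit_vectors) delta (mkgen Pd) g)) _.
  apply: RS_eq_ext (RS_eq_refl _ _ _ _) _ _ => // g.
  rewrite big_const_seq count_predT size_nz_digit_vectors iter_addr_0 -mulr_natl.
  by rewrite -subn1 natrB ?expn_gt0 ?prime_gt0 // natz.
apply: RS_eq_trans (RS_eq_sym (RS_eq_sum (fun a ha => RS_eq_cell (nz_digitsP ha)))) _.
apply: RS_eq_trans (RS_eq_sym (RS_eq_cells (enum_uniq _) nz_digitsP)) _.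
apply: RS_eq_trans (RS_eq_sym RS_eq_ZpN_cells) _.
apply: RS_eq_ext (RS_eq_sym (RS_eq_ZpN n')) _ _ => // g.
rewrite /RS_one; congr (delta _ g); apply: mkgen_ext => s x.
by split=> -[hs h]; split=> // j; rewrite ?ord1; apply: h.
Qed.

End Cells.
End ValuedField.

Theorem mainTheorem4 (p : nat) (K : fieldType) (v : K -> int) (m : nat)
    (S : 'rV[K]_m -> Prop) (n : nat) :
  prime p -> is_Qp p v -> definable v S -> (0 < n)%N ->
  RS_eq p v S
    (fun g => ((p ^ n)%:Z - 1) * delta (mkgen (@P_diag p K v m S n)) g)
    (RS_one v S).
Proof.
move=> p_prime [valM val_ultra [pK_neq0 val_p] residue_nat _] S_def.
by case: n => // n' _; apply: RS_eq_P_diag.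
Qed.
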